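(* Let $X \subset \mathbb{R}^n$ be finite with at least $k+1$ points. Let $(s,[x])$ and $(t,[y])$ be elements of $\Gamma_{k}(X)$, and let $(s_{0},[x_{0}])$ and $(t_{0},[y_{0}])$ be the maximal branch points below $(s,[x])$ and $(t,[y])$, respectively. Then $(s_{0},[x_{0}]) \cup (t_{0},[y_{0}])$ is the maximal branch point below $(s,[x]) \cup (t,[y])$.
   Context: $\mathbb{R}^n$ has Euclidean metric $d$. For $s\ge 0$, $V_s(X)$ is the Vietoris–Rips complex (vertex set $X$, simplices nonempty subsets with pairwise distances $\le s$), and for an integer $k\ge 0$, $L_{s,k}(X)$ is the full subcomplex of $V_s(X)$ on the vertices $x$ having at least $k$ points $x'\ne x$ of $X$ with $d(x,x')\le s$. $\Gamma_{k}(X)$ is the poset whose elements are pairs $(s,[x])$ with $s \in \mathbb{R}_{\geq 0}$ and $[x] \in \pi_{0}L_{s,k}(X)$, with $(s,[x]) \leq (t,[y])$ iff $s \leq t$ and the function $\pi_{0}L_{s,k}(X) \to \pi_{0}L_{t,k}(X)$ induced by inclusion sends $[x]$ to $[y]$. $\cup$ denotes least upper bound (join) in $\Gamma_k(X)$, which exists for any two elements. An element $(t,[x])$ of $\Gamma_{k}(X)$ is a branch point if either (1) there is $s_{0} < t$ such that for all $s$ with $s_{0} \leq s < t$ there are two distinct elements $(s,[x_{0}]) \neq (s,[x_{1}])$ with $(s,[x_{0}]) \leq (t,[x])$ and $(s,[x_{1}]) \leq (t,[x])$; or (2) there is no element $(s,[y])$ with $s<t$ and $(s,[y]) \leq (t,[x])$.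 The maximal branch point below an element $p$ is the (unique) branch point $b \le p$ such that every branch point $b' \le p$ satisfies $b' \le b$. *)

From Stdlib Require Import Reals List Relations.
Import ListNotations.
Open Scope R_scope.

(* Points of R^n are lists of reals of length n (the length constraint is a
   hypothesis of the theorem). *)
Definition pt := list R.

Definition sqsum (l : list R) : R := fold_right Rplus 0 l.
Definition dist (x y : pt) : R :=
  sqrt (sqsum (map (fun p => (fst p - snd p) ^ 2) (combine x y))).

Section Gamma.
Variables (X : list pt) (k : nat).

(* x is a vertex of L_{s,k}(X): x in X having at least k points x' <> x of X
   with d(x,x') <= s. *)
Definition inL (s : R) (x : pt) : Prop :=
  In x X /\
  exists L : list pt, NoDup L /\ length L = k /\
    forall x', In x' L -> In x' X /\ x' <> x /\ dist x x' <= s.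

(* Edge of the 1-skeleton of the full subcomplex L_{s,k}(X) of V_s(X). *)
Definition edgeL (s : R) (a b : pt) : Prop :=
  inL s a /\ inL s b /\ dist a b <= s.

(* Same path component of L_{s,k}(X) (pi_0 of a simplicial complex is
   given by connectivity of its 1-skeleton). *)
Definition sameComp (s : R) (x y : pt) : Prop :=
  inL s x /\ inL s y /\ clos_refl_trans pt (edgeL s) x y.

Record Gelt := mkG { gs : R; gC : pt -> Prop }.

Definition isG (p : Gelt) : Prop :=
  0 <= gs p /\ exists x, inL (gs p) x /\ forall y, gC p y <-> sameComp (gs p) x y.

Definition geq (p q : Gelt) : Prop :=
  gs p = gs q /\ forall y, gC p y <-> gC q y.

(* (s,[x]) <= (t,[y]) iff s <= t and the inclusion-induced map
   pi_0 L_s -> pi_0 L_t sends [x] to [y] (i.e. the class [x] lands in [y]). *)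
Definition gle (p q : Gelt) : Prop :=
  gs p <= gs q /\ forall y, gC p y -> gC q y.

Definition branch (q : Gelt) : Prop :=
  (exists s0, s0 < gs q /\
     forall s, s0 <= s < gs q ->
       exists p0 p1, isG p0 /\ isG p1 /\ gs p0 = s /\ gs p1 = s /\
         ~ geq p0 p1 /\ gle p0 q /\ gle p1 q)
  \/ ~ (exists p, isG p /\ gs p < gs q /\ gle p q).

Definition maxbranch (b p : Gelt) : Prop :=
  isG b /\ branch b /\ gle b p /\
  forall b', isG b' -> branch b' -> gle b' p -> gle b' b.

Definition glub (j p q : Gelt) : Prop :=
  isG j /\ gle p j /\ gle q j /\
  forall u, isG u -> gle p u -> gle q u -> gle j u.

End Gamma.

From Pilot Require Import Defs.
From Stdlib Require Import Reals List Relations Lra Classical.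
Open Scope R_scope.

(* The poset Gamma_k(X) is a merge tree: a component at scale s only grows
   with the scale, so two elements above a common element are comparable
   ([le_above_common]), and any element can be pushed up to every
   intermediate scale below an upper bound ([lift_to_scale]).  Maximal
   branch points are invariant under order-equivalence ([maxbranch_equiv]).
   The theorem then splits into two cases.
   - If p <= q (or q <= p), the join m of p, q is equivalent to q, and the
     maximal branch point b1 below p lies below b2, so b1 \/ b2 is
     equivalent to b2 ([maxbranch_join_of_le]).
   - If p and q are incomparable, their join m is itself a branch point
     (just below scale gs m the lifts of p and q stay apart,
     [join_incomparable_branch]), and b1 \/ b2 is equivalent to m
     ([join_incomparable_equiv]); hence it is the maximal branch point
     below m. *)

Lemma dist_sym (x y : pt) : Defs.dist x y = Defs.dist y x.
Proof.
  unfold Defs.dist; f_equal.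
  revert y; induction x as [|a x IH]; intros [|b y]; simpl; auto.
  unfold sqsum in *; simpl. f_equal; [ring | apply IH].
Qed.

Lemma clos_rt_monotone (A : Type) (R1 R2 : relation A) (a b : A) :
  inclusion A R1 R2 -> clos_refl_trans A R1 a b -> clos_refl_trans A R2 a b.
Proof.
  intros Hincl. induction 1; [apply rt_step; auto | apply rt_refl | eapply rt_trans; eauto].
Qed.

Lemma clos_rt_symmetric (A : Type) (R : relation A) :
  symmetric A R -> symmetric A (clos_refl_trans A R).
Proof.
  intros Hsym a b. induction 1; [apply rt_step; auto | apply rt_refl | eapply rt_trans; eauto].
Qed.

Section Components.
Variables (X : list pt) (k : nat).

Lemma inL_mono (s t : R) (x : pt) : s <= t -> inL X k s x -> inL X k t x.
Proof.
  intros Hst [Hx [L [Hnd [Hlen HL]]]]. split; auto. exists L.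
  split; [auto | split; [auto |]].
  intros x' Hx'. destruct (HL x' Hx') as [HxX [Hne Hd]]. repeat split; auto; lra.
Qed.

Lemma sameComp_mono (s t : R) (x y : pt) :
  s <= t -> sameComp X k s x y -> sameComp X k t x y.
Proof.
  intros Hst [Hx [Hy Hxy]].
  split; [eapply inL_mono; eauto | split; [eapply inL_mono; eauto |]].
  apply clos_rt_monotone with (edgeL X k s); auto.
  intros u v [Hu [Hv Huv]].
  split; [eapply inL_mono; eauto | split; [eapply inL_mono; eauto | lra]].
Qed.

Lemma sameComp_refl (s : R) (x : pt) : inL X k s x -> sameComp X k s x x.
Proof. intros Hx. split; [auto | split; [auto | apply rt_refl]]. Qed.

Lemma sameComp_sym (s : R) (x y : pt) : sameComp X k s x y -> sameComp X k s y x.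
Proof.
  intros [Hx [Hy Hxy]]. split; [auto | split; [auto |]].
  apply clos_rt_symmetric; auto.
  intros u v [Hu [Hv Huv]]. split; [auto | split; [auto |]]. rewrite dist_sym; auto.
Qed.

Lemma sameComp_trans (s : R) (x y z : pt) :
  sameComp X k s x y -> sameComp X k s y z -> sameComp X k s x z.
Proof.
  intros [Hx [_ Hxy]] [_ [Hz Hyz]]. split; [auto | split; [auto |]]. eapply rt_trans; eauto.
Qed.

Lemma comp_nonempty (p : Gelt) : isG X k p -> exists w, gC p w.
Proof. intros [_ [r [Hr Hiff]]]. exists r. apply Hiff, sameComp_refl; auto. Qed.

Lemma comp_closed (p : Gelt) (w z : pt) :
  isG X k p -> gC p w -> sameComp X k (gs p) w z -> gC p z.
Proof.
  intros [_ [r [_ Hiff]]] Hw Hwz. apply Hiff. apply Hiff in Hw. eapply sameComp_trans; eauto.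
Qed.

Lemma comp_connected (p : Gelt) (w z : pt) :
  isG X k p -> gC p w -> gC p z -> sameComp X k (gs p) w z.
Proof.
  intros [_ [r [_ Hiff]]] Hw Hz. apply Hiff in Hw. apply Hiff in Hz.
  eapply sameComp_trans; [apply sameComp_sym|]; eauto.
Qed.

End Components.

Lemma gle_refl (p : Gelt) : gle p p.
Proof. split; [lra | auto]. Qed.

Lemma gle_trans (a b c : Gelt) : gle a b -> gle b c -> gle a c.
Proof. intros [Hab Cab] [Hbc Cbc]. split; [lra | auto]. Qed.

Lemma geq_gle (p q : Gelt) : geq p q -> gle q p.
Proof. intros [Hs HC]. split; [lra | apply HC]. Qed.

Definition gequiv (p q : Gelt) : Prop := gle p q /\ gle q p.

Lemma gequiv_sym (p q : Gelt) : gequiv p q -> gequiv q p.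
Proof. intros [Hpq Hqp]. split; auto. Qed.

Section MergeTree.
Variables (X : list pt) (k : nat).

Lemma le_above_common_scale (a x y : Gelt) :
  isG X k a -> isG X k x -> isG X k y ->
  gle a x -> gle a y -> gs x <= gs y -> gle x y.
Proof.
  intros Ha Hx Hy [_ Hax] [_ Hay] Hs. split; auto.
  destruct (comp_nonempty X k a Ha) as [w Hw].
  intros z Hz. apply (comp_closed X k y w z); auto.
  eapply sameComp_mono; eauto. apply comp_connected; auto.
Qed.

Lemma le_above_common (a x y : Gelt) :
  isG X k a -> isG X k x -> isG X k y ->
  gle a x -> gle a y -> gle x y \/ gle y x.
Proof.
  intros. destruct (Rle_dec (gs x) (gs y)).
  - left; apply (le_above_common_scale a); auto.
  - right; apply (le_above_common_scale a); auto; lra.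
Qed.

Lemma le_same_scale (p m : Gelt) :
  isG X k p -> isG X k m -> gle p m -> gs m <= gs p -> gle m p.
Proof. intros Hp Hm Hpm Hs. apply (le_above_common_scale p); auto using gle_refl. Qed.

Lemma lift_to_scale (p m : Gelt) (s : R) :
  isG X k p -> isG X k m -> gle p m -> gs p <= s -> s <= gs m ->
  exists p', isG X k p' /\ gs p' = s /\ gle p p' /\ gle p' m.
Proof.
  intros Hp Hm Hpm Hps Hsm. pose proof Hp as [Hp0 [x [Hx Hiff]]].
  exists (mkG s (sameComp X k s x)). split; [| split; [reflexivity | split]].
  - split; simpl; [lra |]. exists x. split; [eapply inL_mono; eauto | tauto].
  - split; simpl; [auto |]. intros y Hy. apply Hiff in Hy. eapply sameComp_mono; eauto.
  - split; simpl; [auto |]. intros y Hy. apply (comp_closed X k m x y); auto.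
    + apply (proj2 Hpm), Hiff, sameComp_refl; auto.
    + eapply sameComp_mono; eauto.
Qed.

Lemma branch_equiv (q q' : Gelt) : gequiv q q' -> branch X k q -> branch X k q'.
Proof.
  intros [Hqq' Hq'q] Hb. assert (Hs : gs q = gs q') by (destruct Hqq', Hq'q; lra).
  destruct Hb as [[s0 [Hs0 Hsplit]] | Hleaf].
  - left. exists s0. rewrite <- Hs. split; auto. intros s Hrange.
    destruct (Hsplit s Hrange) as [p0 [p1 [Hp0 [Hp1 [Hs0' [Hs1' [Hne [H0 H1]]]]]]]].
    exists p0, p1. do 5 (split; [auto |]). split; eapply gle_trans; eauto.
  - right. intros [p [Hp [Hlt Hpq']]]. apply Hleaf. exists p. rewrite Hs.
    split; [auto | split; [auto | eapply gle_trans; eauto]].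
Qed.

Lemma maxbranch_equiv (b p b' p' : Gelt) :
  isG X k b' -> gequiv b b' -> gequiv p p' -> maxbranch X k b p -> maxbranch X k b' p'.
Proof.
  intros Hb' [Hbb' Hb'b] [Hpp' Hp'p] [_ [Hbr [Hbp Hmax]]].
  split; [auto | split; [| split]].
  - apply branch_equiv with b; [split |]; auto.
  - apply gle_trans with b; [auto | apply gle_trans with p; auto].
  - intros c Hc Hcbr Hcp'. apply gle_trans with b; auto.
    apply Hmax; auto. eapply gle_trans; eauto.
Qed.

Lemma maxbranch_self (m : Gelt) : isG X k m -> branch X k m -> maxbranch X k m m.
Proof. intros Hm Hbr. split; [auto | split; [auto | split; auto using gle_refl]]. Qed.

Lemma glub_sym (j p q : Gelt) : glub X k j p q -> glub X k j q p.
Proof. intros [Hj [Hpj [Hqj Hmin]]]. split; [auto | split; [auto | split; auto]]. Qed.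

Lemma glub_of_le (j p q : Gelt) : isG X k q -> gle p q -> glub X k j p q -> gequiv j q.
Proof. intros Hq Hpq [_ [_ [Hqj Hmin]]]. split; auto. apply Hmin; auto using gle_refl. Qed.

(* Comparable case: if p <= q, then b1 \/ b2 is equivalent to b2 and
   p \/ q to q. *)
Lemma maxbranch_join_of_le (p q b1 b2 j m : Gelt) :
  isG X k q -> maxbranch X k b1 p -> maxbranch X k b2 q -> gle p q ->
  glub X k j b1 b2 -> glub X k m p q -> maxbranch X k j m.
Proof.
  intros Hq [Hb1 [Hb1br [Hb1p _]]] Hb2max Hpq Hj Hm.
  pose proof Hb2max as [Hb2 [_ [_ Hb2top]]].
  assert (Hb12 : gle b1 b2) by (apply Hb2top; auto; eapply gle_trans; eauto).
  apply maxbranch_equiv with b2 q; auto.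
  - apply Hj.
  - apply gequiv_sym, (glub_of_le j b1 b2); auto.
  - apply gequiv_sym, (glub_of_le m p q); auto.
Qed.

Lemma join_scale_gt (p q m : Gelt) :
  isG X k p -> isG X k m -> glub X k m p q -> ~ gle q p -> gs p < gs m.
Proof.
  intros Hp Hm [_ [Hpm [Hqm _]]] Hnqp.
  destruct (Rle_lt_or_eq_dec _ _ (proj1 Hpm)) as [Hlt | Heq]; auto.
  exfalso. apply Hnqp. apply gle_trans with m; auto.
  apply le_same_scale; auto; lra.
Qed.

Lemma join_incomparable_branch (p q m : Gelt) :
  isG X k p -> isG X k q -> glub X k m p q -> ~ gle p q -> ~ gle q p -> branch X k m.
Proof.
  intros Hp Hq Hjoin Hnpq Hnqp. pose proof Hjoin as [Hm [Hpm [Hqm Hmin]]].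
  pose proof (join_scale_gt p q m Hp Hm Hjoin Hnqp) as Hpm_lt.
  pose proof (join_scale_gt q p m Hq Hm (glub_sym m p q Hjoin) Hnpq) as Hqm_lt.
  left. exists (Rmax (gs p) (gs q)). split; [apply Rmax_lub_lt; auto|].
  intros s [Hs_lo Hs_hi].
  pose proof (Rmax_l (gs p) (gs q)). pose proof (Rmax_r (gs p) (gs q)).
  destruct (lift_to_scale p m s Hp Hm Hpm ltac:(lra) ltac:(lra)) as [p0 [? [? [Hpp0 ?]]]].
  destruct (lift_to_scale q m s Hq Hm Hqm ltac:(lra) ltac:(lra)) as [p1 [? [? [Hqp1 ?]]]].
  exists p0, p1. do 4 (split; [auto |]). split; [| split; auto].
  (* If the lifts coincided, they would be an upper bound of p and q below m. *)
  intros Heq.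
  assert (Hmp0 : gle m p0) by (apply Hmin; eauto using gle_trans, geq_gle).
  destruct Hmp0; lra.
Qed.

(* Incomparable case, part 2: b1 \/ b2 is equivalent to p \/ q, since b1 <= j
   forces p <= j (otherwise p and q would be comparable), and likewise q <= j. *)
Lemma join_above_incomparable (p q b1 b2 j : Gelt) :
  isG X k p -> isG X k q -> isG X k j ->
  maxbranch X k b1 p -> maxbranch X k b2 q -> gle b1 j -> gle b2 j ->
  ~ gle p q -> ~ gle q p -> gle p j.
Proof.
  intros Hp Hq Hj [Hb1 [_ [Hb1p _]]] [Hb2 [_ [Hb2q _]]] Hb1j Hb2j Hnpq Hnqp.
  destruct (le_above_common b1 p j Hb1 Hp Hj Hb1p Hb1j) as [Hpj | Hjp]; auto.
  exfalso. assert (Hb2p : gle b2 p) by (eapply gle_trans; eauto).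
  destruct (le_above_common b2 p q Hb2 Hp Hq Hb2p Hb2q); tauto.
Qed.

Lemma join_incomparable_equiv (p q b1 b2 j m : Gelt) :
  isG X k p -> isG X k q ->
  maxbranch X k b1 p -> maxbranch X k b2 q -> ~ gle p q -> ~ gle q p ->
  glub X k j b1 b2 -> glub X k m p q -> gequiv j m.
Proof.
  intros Hp Hq Hb1max Hb2max Hnpq Hnqp [Hj [Hb1j [Hb2j Hjmin]]] [Hm [Hpm [Hqm Hmmin]]].
  pose proof Hb1max as [_ [_ [Hb1p _]]].
  pose proof Hb2max as [_ [_ [Hb2q _]]].
  split.
  - apply Hjmin; auto; eapply gle_trans; eauto.
  - apply Hmmin; auto.
    + apply (join_above_incomparable p q b1 b2 j); auto.
    + apply (join_above_incomparable q p b2 b1 j); auto.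
Qed.

End MergeTree.

Theorem lemma12 (n : nat) (X : list pt) (k : nat)
  (HX : NoDup X) (Hdim : Forall (fun v => length v = n) X)
  (Hcard : (k + 1 <= length X)%nat)
  (p q b1 b2 : Gelt)
  (Hp : isG X k p) (Hq : isG X k q)
  (Hb1 : maxbranch X k b1 p) (Hb2 : maxbranch X k b2 q) :
  forall j m : Gelt, glub X k j b1 b2 -> glub X k m p q -> maxbranch X k j m.
Proof.
  intros j m Hj Hm.
  destruct (classic (gle p q)) as [Hpq | Hnpq].
  { apply (maxbranch_join_of_le X k p q b1 b2); auto. }
  destruct (classic (gle q p)) as [Hqp | Hnqp].
  { apply (maxbranch_join_of_le X k q p b2 b1); auto using glub_sym. }
  assert (HmG : isG X k m) by apply Hm.
  assert (Hmbr : branch X k m) by (apply (join_incomparable_branch X k p q); auto).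
  apply maxbranch_equiv with m m.
  - apply Hj.
  - apply gequiv_sym, (join_incomparable_equiv X k p q b1 b2 j m); auto.
  - split; apply gle_refl.
  - apply maxbranch_self; auto.
Qed.
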